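(* Let $\Phi_1,\Phi_2,\Phi_3,\Psi_1,\Psi_2,\Psi_3:\mathbb{Z}^3\to\mathbb{Q}$ be the functions defined in the context. Then for all integers $a,b,c$ and each $i\in\{1,2,3\}$, \[ \Phi_i(a,b,c)\,\Phi_i(a-3,b-3,c-2)=\Phi_i(a-2,b-1,c)\,\Phi_i(a-1,b-2,c-2)+\Phi_i(a-1,b-1,c-1)\,\Phi_i(a-2,b-2,c-1) \] and \[ \Psi_i(a,b,c)\,\Psi_i(a-3,b-3,c-2)=\Psi_i(a-2,b-1,c)\,\Psi_i(a-1,b-2,c-2)+\Psi_i(a-1,b-1,c-1)\,\Psi_i(a-2,b-2,c-1). \]
   Context: For integers $a,b,c$ define $g(a,b,c)=(b-a)(b-c)+\left\lfloor\frac{(a-c)^2}{3}\right\rfloor$, $q(a,b,c)=\left\lfloor\frac{(a-b+c)^2}{4}\right\rfloor$, $\alpha(a,b,c)=2$ if $3b+a-c\equiv 1\pmod 6$, $\alpha(a,b,c)=3$ if $3b+a-c\equiv 5\pmod 6$, and $\alpha(a,b,c)=1$ otherwise; $\beta(a,b,c)=3$ if $3b+a-c\equiv 1\pmod 6$, $\beta(a,b,c)=2$ if $3b+a-c\equiv 5\pmod 6$, and $\beta(a,b,c)=1$ otherwise. Writing $g=g(a,b,c)$, $q=q(a,b,c)$ and $r=\lfloor (a-c+1)/3\rfloor$, define (exponents may be negative, so values are rational) $\Phi_1(a,b,c)=\alpha(a,b,c)\,2^{g(a,b,c+1)}5^{g}11^{q}$, $\Phi_2(a,b,c)=\alpha(a,b,c)\,2^{g(a,b,c-1)-r+(a-b)}5^{g}11^{q}$,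 $\Phi_3(a,b,c)=\alpha(a,b,c)\,2^{g(a,b,c-1)-r}5^{g}11^{q}$, $\Psi_1(a,b,c)=\beta(a,b,c)\,2^{g(a,b,c-1)}5^{g}11^{q}$, $\Psi_2(a,b,c)=\beta(a,b,c)\,2^{g(a,b,c+1)+r-(a-b)}5^{g}11^{q}$, $\Psi_3(a,b,c)=\beta(a,b,c)\,2^{g(a,b,c+1)+r}5^{g}11^{q}$. *)

From mathcomp Require Import all_boot all_order all_algebra.
Set Implicit Arguments. Unset Strict Implicit. Unset Printing Implicit Defensive.
Import Order.TTheory GRing.Theory Num.Theory.
Local Open Scope ring_scope.

(* Integer floor division: for d > 0, (m %/ d)%Z is the floor of m/d
   (intdiv's remainder (m %% d)%Z is in [0, d)). *)

Definition g (a b c : int) : int :=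
  (b - a) * (b - c) + ((a - c) ^+ 2 %/ 3)%Z.

Definition q (a b c : int) : int := ((a - b + c) ^+ 2 %/ 4)%Z.

Definition alpha (a b c : int) : rat :=
  let m := ((3 * b + a - c) %% 6)%Z in
  if m == 1 then 2%:Q else if m == 5 then 3%:Q else 1%:Q.

Definition beta (a b c : int) : rat :=
  let m := ((3 * b + a - c) %% 6)%Z in
  if m == 1 then 3%:Q else if m == 5 then 2%:Q else 1%:Q.

Definition r (a c : int) : int := ((a - c + 1) %/ 3)%Z.

Definition common (a b c : int) : rat :=
  (5%:Q) ^ (g a b c) * (11%:Q) ^ (q a b c).

Definition Phi1 (a b c : int) : rat :=
  alpha a b c * (2%:Q) ^ (g a b (c + 1)) * common a b c.
Definition Phi2 (a b c : int) : rat :=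
  alpha a b c * (2%:Q) ^ (g a b (c - 1) - r a c + (a - b)) * common a b c.
Definition Phi3 (a b c : int) : rat :=
  alpha a b c * (2%:Q) ^ (g a b (c - 1) - r a c) * common a b c.
Definition Psi1 (a b c : int) : rat :=
  beta a b c * (2%:Q) ^ (g a b (c - 1)) * common a b c.
Definition Psi2 (a b c : int) : rat :=
  beta a b c * (2%:Q) ^ (g a b (c + 1) + r a c - (a - b)) * common a b c.
Definition Psi3 (a b c : int) : rat :=
  beta a b c * (2%:Q) ^ (g a b (c + 1) + r a c) * common a b c.

Definition Phi (i : 'I_3) : int -> int -> int -> rat :=
  match val i with 0%N => Phi1 | 1%N => Phi2 | _ => Phi3 end.
Definition Psi (i : 'I_3) : int -> int -> int -> rat :=
  match val i with 0%N => Psi1 | 1%N => Psi2 | _ => Psi3 end.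

(* Each of Phi_i, Psi_i is a coefficient alpha or beta times 2^E 5^g 11^q.  The
   pairs of points {(a,b,c), (a-3,b-3,c-2)}, {(a-2,b-1,c), (a-1,b-2,c-2)} and
   {(a-1,b-1,c-1), (a-2,b-2,c-1)} have the same sum, so the defects ddA, ddB
   comparing the totals of a function on these pairs vanish on quadratic
   polynomials.  The exponents are quadratic up to floors that are periodic in
   a-c mod 3 and a-b+c mod 2, so their defects depend only on the phase
   m = 3b+a-c mod 6, which also determines the coefficients.  The relation thus
   reduces to six numerical identities, e.g. for m = 0
   alpha(0) alpha(2) = alpha(1)^2 2/11 + alpha(3) alpha(5)/11, i.e. 11 = 8 + 3. *)

From mathcomp Require Import all_boot all_order all_algebra zify ring.
Import Order.TTheory GRing.Theory Num.Theory.
Local Open Scope ring_scope.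

Definition octahedron (F : int -> int -> int -> rat) : Prop :=
  forall a b c,
    F a b c * F (a - 3) (b - 3) (c - 2)
      = F (a - 2) (b - 1) c * F (a - 1) (b - 2) (c - 2)
        + F (a - 1) (b - 1) (c - 1) * F (a - 2) (b - 2) (c - 1).

Lemma octahedron_ext (F G : int -> int -> int -> rat) :
  (forall a b c, F a b c = G a b c) -> octahedron G -> octahedron F.
Proof. by move=> FG octG a b c; rewrite !FG. Qed.

Definition ddA (f : int -> int -> int -> int) (a b c : int) : int :=
  f (a - 2) (b - 1) c + f (a - 1) (b - 2) (c - 2) - f a b c - f (a - 3) (b - 3) (c - 2).

Definition ddB (f : int -> int -> int -> int) (a b c : int) : int :=
  f (a - 1) (b - 1) (c - 1) + f (a - 2) (b - 2) (c - 1) - f a b c - f (a - 3) (b - 3) (c - 2).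

Definition scale (x y z : int) : rat := 2%:Q ^ x * 5%:Q ^ y * 11%:Q ^ z.

Lemma scaleD (x y z x' y' z' : int) :
  scale (x + x') (y + y') (z + z') = scale x y z * scale x' y' z'.
Proof. by rewrite /scale !expfzDr //; ring. Qed.

Lemma octahedron_scale (k : int -> int -> int -> rat) (e2 e5 e11 : int -> int -> int -> int) :
  (forall a b c,
    k a b c * k (a - 3) (b - 3) (c - 2)
      = k (a - 2) (b - 1) c * k (a - 1) (b - 2) (c - 2)
          * scale (ddA e2 a b c) (ddA e5 a b c) (ddA e11 a b c)
        + k (a - 1) (b - 1) (c - 1) * k (a - 2) (b - 2) (c - 1)
          * scale (ddB e2 a b c) (ddB e5 a b c) (ddB e11 a b c)) ->
  octahedron (fun a b c => k a b c * scale (e2 a b c) (e5 a b c) (e11 a b c)).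
Proof.
move=> kE a b c /=.
set s := fun x y z => scale (e2 x y z) (e5 x y z) (e11 x y z).
have sA : s (a - 2) (b - 1) c * s (a - 1) (b - 2) (c - 2)
    = scale (ddA e2 a b c) (ddA e5 a b c) (ddA e11 a b c) * (s a b c * s (a - 3) (b - 3) (c - 2)).
  by rewrite /s -!scaleD /ddA; congr scale; ring.
have sB : s (a - 1) (b - 1) (c - 1) * s (a - 2) (b - 2) (c - 1)
    = scale (ddB e2 a b c) (ddB e5 a b c) (ddB e11 a b c) * (s a b c * s (a - 3) (b - 3) (c - 2)).
  by rewrite /s -!scaleD /ddB; congr scale; ring.
rewrite [LHS]mulrACA kE [X in _ = X + _]mulrACA [X in _ = _ + X]mulrACA sA sB /s.
ring.
Qed.

Definition ePhi (i : 'I_3) : int -> int -> int -> int :=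
  match val i with
  | 0%N => fun a b c => g a b (c + 1)
  | 1%N => fun a b c => g a b (c - 1) - r a c + (a - b)
  | _ => fun a b c => g a b (c - 1) - r a c
  end.

Definition ePsi (i : 'I_3) : int -> int -> int -> int :=
  match val i with
  | 0%N => fun a b c => g a b (c - 1)
  | 1%N => fun a b c => g a b (c + 1) + r a c - (a - b)
  | _ => fun a b c => g a b (c + 1) + r a c
  end.

Lemma PhiE (i : 'I_3) (a b c : int) :
  Phi i a b c = alpha a b c * scale (ePhi i a b c) (g a b c) (q a b c).
Proof.
by case: i => [[|[|[|n]]] Hi] //; rewrite /Phi /ePhi /= /Phi1 /Phi2 /Phi3 /common /scale !mulrA.
Qed.

Lemma PsiE (i : 'I_3) (a b c : int) :
  Psi i a b c = beta a b c * scale (ePsi i a b c) (g a b c) (q a b c).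
Proof.
by case: i => [[|[|[|n]]] Hi] //; rewrite /Psi /ePsi /= /Psi1 /Psi2 /Psi3 /common /scale !mulrA.
Qed.

Definition phase (a b c : int) : int := ((3 * b + a - c) %% 6)%Z.

Lemma phase_bound (a b c : int) : 0 <= phase a b c < 6.
Proof. rewrite /phase; lia. Qed.

Lemma phase_shifts (a b c : int) :
  [/\ phase (a - 3) (b - 3) (c - 2) = ((phase a b c + 2) %% 6)%Z,
      phase (a - 2) (b - 1) c = ((phase a b c + 1) %% 6)%Z,
      phase (a - 1) (b - 2) (c - 2) = ((phase a b c + 1) %% 6)%Z,
      phase (a - 1) (b - 1) (c - 1) = ((phase a b c + 3) %% 6)%Z
    & phase (a - 2) (b - 2) (c - 1) = ((phase a b c + 5) %% 6)%Z].
Proof. rewrite /phase; split; lia. Qed.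

(* a - c = 3 k + u and a - b + c = 2 l + v. *)
Lemma residue_ind (P : int -> int -> int -> Prop) :
  (forall u v c k l : int, (u = 0 \/ u = 1 \/ u = 2) -> (v = 0 \/ v = 1) ->
     P (c + 3 * k + u) (2 * c + 3 * k + u - 2 * l - v) c) ->
  forall a b c, P a b c.
Proof.
move=> HP a b c.
suff [k [l [u [v [Hu Hv -> ->]]]]] : exists k l u v : int,
    [/\ u = 0 \/ u = 1 \/ u = 2, v = 0 \/ v = 1,
        a = c + 3 * k + u & b = 2 * c + 3 * k + u - 2 * l - v] by exact: HP.
exists ((a - c) %/ 3)%Z, ((a - b + c) %/ 2)%Z, ((a - c) %% 3)%Z, ((a - b + c) %% 2)%Z.
by split; lia.
Qed.

Lemma dd_g (a b c : int) :
  ddA g a b c = ((phase a b c %% 3)%Z == 2)%:Z /\ ddB g a b c = 0.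
Proof.
move: a b c; apply: residue_ind => u v c k l.
by rewrite /ddA /ddB /g /phase !expr2; case=> [|[|]] ->; case=> ->; split; lia.
Qed.

Lemma dd_q (a b c : int) :
  ddA q a b c = - ((phase a b c %% 2)%Z == 0)%:Z /\ ddB q a b c = - ((phase a b c %% 2)%Z == 0)%:Z.
Proof.
move: a b c; apply: residue_ind => u v c k l.
by rewrite /ddA /ddB /q /phase !expr2; case=> [|[|]] ->; case=> ->; split; lia.
Qed.

Lemma dd_ePhi (i : 'I_3) (a b c : int) :
  ddA (ePhi i) a b c = ((phase a b c %% 3)%Z == 0)%:Z /\ ddB (ePhi i) a b c = 0.
Proof.
move: a b c; apply: residue_ind => u v c k l.
by case: i => [[|[|[|n]]] Hi] //; rewrite /ePhi /= /ddA /ddB /g /r /phase !expr2;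
  case=> [|[|]] ->; case=> ->; split; lia.
Qed.

Lemma dd_ePsi (i : 'I_3) (a b c : int) :
  ddA (ePsi i) a b c = ((phase a b c %% 3)%Z == 1)%:Z /\ ddB (ePsi i) a b c = 0.
Proof.
move: a b c; apply: residue_ind => u v c k l.
by case: i => [[|[|[|n]]] Hi] //; rewrite /ePsi /= /ddA /ddB /g /r /phase !expr2;
  case=> [|[|]] ->; case=> ->; split; lia.
Qed.

Definition alpha_at (m : int) : rat := if m == 1 then 2%:Q else if m == 5 then 3%:Q else 1%:Q.
Definition beta_at (m : int) : rat := if m == 1 then 3%:Q else if m == 5 then 2%:Q else 1%:Q.

Lemma alphaE (a b c : int) : alpha a b c = alpha_at (phase a b c). Proof. by []. Qed.
Lemma betaE (a b c : int) : beta a b c = beta_at (phase a b c). Proof. by []. Qed.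

Lemma alpha_at_identity (m : int) : 0 <= m < 6 ->
  alpha_at m * alpha_at ((m + 2) %% 6)%Z
    = alpha_at ((m + 1) %% 6)%Z * alpha_at ((m + 1) %% 6)%Z
        * scale ((m %% 3)%Z == 0)%:Z ((m %% 3)%Z == 2)%:Z (- ((m %% 2)%Z == 0)%:Z)
      + alpha_at ((m + 3) %% 6)%Z * alpha_at ((m + 5) %% 6)%Z
        * scale 0 0 (- ((m %% 2)%Z == 0)%:Z).
Proof. by case: m => [[|[|[|[|[|[|n]]]]]]|n] //= _; apply/eqP; vm_compute. Qed.

Lemma beta_at_identity (m : int) : 0 <= m < 6 ->
  beta_at m * beta_at ((m + 2) %% 6)%Z
    = beta_at ((m + 1) %% 6)%Z * beta_at ((m + 1) %% 6)%Z
        * scale ((m %% 3)%Z == 1)%:Z ((m %% 3)%Z == 2)%:Z (- ((m %% 2)%Z == 0)%:Z)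
      + beta_at ((m + 3) %% 6)%Z * beta_at ((m + 5) %% 6)%Z
        * scale 0 0 (- ((m %% 2)%Z == 0)%:Z).
Proof. by case: m => [[|[|[|[|[|[|n]]]]]]|n] //= _; apply/eqP; vm_compute. Qed.

Lemma Phi_octahedron (i : 'I_3) : octahedron (Phi i).
Proof.
apply: octahedron_ext (PhiE i) _; apply: octahedron_scale => a b c.
have [-> ->] := dd_ePhi i a b c; have [-> ->] := dd_g a b c; have [-> ->] := dd_q a b c.
rewrite !alphaE; have [-> -> -> -> ->] := phase_shifts a b c.
exact: alpha_at_identity (phase_bound a b c).
Qed.

Lemma Psi_octahedron (i : 'I_3) : octahedron (Psi i).
Proof.
apply: octahedron_ext (PsiE i) _; apply: octahedron_scale => a b c.
have [-> ->] := dd_ePsi i a b c; have [-> ->] := dd_g a b c; have [-> ->] := dd_q a b c.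
rewrite !betaE; have [-> -> -> -> ->] := phase_shifts a b c.
exact: beta_at_identity (phase_bound a b c).
Qed.

Theorem lemma4p1 :
  forall (i : 'I_3) (a b c : int),
    Phi i a b c * Phi i (a - 3) (b - 3) (c - 2)
      = Phi i (a - 2) (b - 1) c * Phi i (a - 1) (b - 2) (c - 2)
        + Phi i (a - 1) (b - 1) (c - 1) * Phi i (a - 2) (b - 2) (c - 1)
    /\
    Psi i a b c * Psi i (a - 3) (b - 3) (c - 2)
      = Psi i (a - 2) (b - 1) c * Psi i (a - 1) (b - 2) (c - 2)
        + Psi i (a - 1) (b - 1) (c - 1) * Psi i (a - 2) (b - 2) (c - 1).
Proof. by move=> i a b c; split; [exact: Phi_octahedron | exact: Psi_octahedron]. Qed.
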